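(* Let $h_n>0$ and $k_n>0$ be sequences with $h_n\to0$, $k_n\to0$, let $f$ be a real valued function defined on the set $D=\{0,h_1,-k_1,h_2,-k_2,\ldots\}$, and let $L,R$ be real numbers such that \[\frac{f(h_n)}{h_n}\to R\quad\text{and}\quad\frac{f(-k_n)}{-k_n}\to L.\] Then every sequential cord derivative of $f$ at $0$ is a real number between $R$ and $L$ (inclusive).
   Context: $L'\in\overline{\mathbb{R}}=\mathbb{R}\cup\{\pm\infty\}$ is a sequential cord derivative of $f$ at $0$ if there are sequences $h'_n>0$, $k'_n>0$ with $h'_n\to0$, $k'_n\to0$, $h'_n\in D$, $-k'_n\in D$ for all $n$, and $\frac{f(h'_n)-f(-k'_n)}{h'_n+k'_n}\to L'$. *)

From Stdlib Require Import Reals.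
From Coquelicot Require Import Coquelicot.
Open Scope R_scope.

(* The domain D = {0, h_0, -k_0, h_1, -k_1, ...} (indexing from 0). *)
Definition domD (h k : nat -> R) (x : R) : Prop :=
  x = 0 \/ exists n : nat, x = h n \/ x = - k n.

Definition seq_cord_derivative (D : R -> Prop) (f : R -> R) (L' : Rbar) : Prop :=
  exists h' k' : nat -> R,
    (forall n, 0 < h' n) /\ (forall n, 0 < k' n) /\
    is_lim_seq h' 0 /\ is_lim_seq k' 0 /\
    (forall n, D (h' n)) /\ (forall n, D (- k' n)) /\
    is_lim_seq (fun n => (f (h' n) - f (- k' n)) / (h' n + k' n)) L'.

(** The cord quotient [(f h - f (-k)) / (h + k)] is the weighted mean of the
    one-sided difference quotients [f h / h] and [f (-k) / (-k)] with weights
    [h] and [k], so it lies between their minimum and maximum.  Along the given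
    sequences, the points of [D] reached by [h'_n, k'_n -> 0] are eventually
    of the form [h_m, k_m] with large [m], so both one-sided quotients still
    tend to [R] and [L]; the bounds pass to the limit [L']. *)

From Stdlib Require Import Reals Lra Lia.
From Coquelicot Require Import Coquelicot.
Open Scope R_scope.

Lemma Rmax_abs (x y : R) : Rmax x y = (x + y + Rabs (x - y)) / 2.
Proof.
  unfold Rmax; destruct (Rle_dec x y).
  - rewrite Rabs_left1; lra.
  - rewrite Rabs_right; lra.
Qed.

Lemma is_lim_seq_Rmax (u v : nat -> R) (a b : R) :
  is_lim_seq u a -> is_lim_seq v b ->
  is_lim_seq (fun n => Rmax (u n) (v n)) (Rmax a b).
Proof.
  intros Hu Hv.
  apply (is_lim_seq_ext (fun n => (u n + v n + Rabs (u n - v n)) * / 2)).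
  { intro n; rewrite Rmax_abs; reflexivity. }
  rewrite Rmax_abs.
  apply (is_lim_seq_scal_r _ (/ 2) (a + b + Rabs (a - b))).
  apply is_lim_seq_plus'; [now apply is_lim_seq_plus'|].
  apply (is_lim_seq_abs _ (a - b)), is_lim_seq_minus'; assumption.
Qed.

Lemma is_lim_seq_Rmin (u v : nat -> R) (a b : R) :
  is_lim_seq u a -> is_lim_seq v b ->
  is_lim_seq (fun n => Rmin (u n) (v n)) (Rmin a b).
Proof.
  intros Hu Hv.
  assert (Hmin : forall x y, Rmin x y = - Rmax (- x) (- y)).
  { intros x y; rewrite Ropp_Rmax, !Ropp_involutive; reflexivity. }
  apply (is_lim_seq_ext (fun n => - Rmax (- u n) (- v n))).
  { intro n; symmetry; apply Hmin. }
  rewrite Hmin.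
  apply (is_lim_seq_opp _ (Rmax (- a) (- b))).
  apply is_lim_seq_Rmax; [apply (is_lim_seq_opp _ a) | apply (is_lim_seq_opp _ b)];
    assumption.
Qed.

Lemma weighted_mean_between (p q a b : R) :
  0 < p -> 0 < q -> Rmin a b <= (p * a + q * b) / (p + q) <= Rmax a b.
Proof.
  intros Hp Hq.
  assert (Hmin := Rmin_l a b); assert (Hmin' := Rmin_r a b).
  assert (Hmax := Rmax_l a b); assert (Hmax' := Rmax_r a b).
  split; apply Rmult_le_reg_r with (p + q); try lra;
    unfold Rdiv; rewrite Rmult_assoc, Rinv_l by lra; nra.
Qed.

Lemma cord_quotient_between (f : R -> R) (x y : R) :
  0 < x -> 0 < y ->
  Rmin (f (- y) / - y) (f x / x) <= (f x - f (- y)) / (x + y)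
    <= Rmax (f (- y) / - y) (f x / x).
Proof.
  intros Hx Hy.
  replace ((f x - f (- y)) / (x + y))
    with ((y * (f (- y) / - y) + x * (f x / x)) / (y + x)) by (field; lra).
  now apply weighted_mean_between.
Qed.

Section AlongValues.

Variables (g u : nat -> R).
Hypothesis g_neq0 : forall m, g m <> 0.
Hypothesis u_to_0 : is_lim_seq u 0.
Hypothesis u_in_range : forall n, exists m, u n = g m.

(* The nonzero values [g 0, ..., g (N-1)] are at positive distance from [0]. *)
Lemma eventually_avoids_first_values (N : nat) :
  eventually (fun n => forall j, (j < N)%nat -> u n <> g j).
Proof.
  induction N as [|N IHN].
  - apply filter_forall; intros n j Hj; lia.
  - assert (HgN : 0 < Rabs (g N)) by (apply Rabs_pos_lt, g_neq0).
    assert (Hnear := proj2 (is_lim_seq_spec u 0) u_to_0 (mkposreal _ HgN)).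
    eapply filter_imp; [|exact (filter_and _ _ IHN Hnear)].
    intros n [Hlt Hnear_n] j Hj; simpl in Hnear_n.
    destruct (Nat.eq_dec j N) as [->|HjN]; [|apply Hlt; lia].
    intro E; rewrite E, Rminus_0_r in Hnear_n; lra.
Qed.

Lemma is_lim_seq_along_values (F : R -> R) (l : Rbar) :
  is_lim_seq (fun m => F (g m)) l -> is_lim_seq (fun n => F (u n)) l.
Proof.
  intros Hl P HP.
  destruct (Hl P HP) as [N HN].
  change (eventually (fun n => P (F (u n)))).
  eapply filter_imp; [|exact (eventually_avoids_first_values N)].
  intros n Hn; destruct (u_in_range n) as [m Hm]; rewrite Hm.
  apply HN; destruct (Nat.le_gt_cases N m) as [|HmN]; [assumption|].
  exfalso; exact (Hn m HmN Hm).
Qed.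

End AlongValues.

Section Domain.

Variables (h k : nat -> R).
Hypotheses (h_pos : forall n, 0 < h n) (k_pos : forall n, 0 < k n).

Lemma domD_pos (x : R) : 0 < x -> domD h k x -> exists m, x = h m.
Proof.
  intros Hx [E|[m [E|E]]]; [lra|now exists m|].
  specialize (k_pos m); lra.
Qed.

Lemma domD_neg (x : R) : 0 < x -> domD h k (- x) -> exists m, x = k m.
Proof.
  intros Hx [E|[m [E|E]]]; [lra| |exists m; lra].
  specialize (h_pos m); lra.
Qed.

End Domain.

Theorem proposition4p4 (h k : nat -> R) (f : R -> R) (L R0 : R) :
  (forall n, 0 < h n) -> (forall n, 0 < k n) ->
  is_lim_seq h 0 -> is_lim_seq k 0 ->
  is_lim_seq (fun n => f (h n) / h n) R0 ->
  is_lim_seq (fun n => f (- k n) / (- k n)) L ->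
  forall L' : Rbar, seq_cord_derivative (domD h k) f L' ->
    exists r : R, L' = Finite r /\ Rmin L R0 <= r /\ r <= Rmax L R0.
Proof.
  intros Hh Hk _ _ HR HL L' (h' & k' & Hh' & Hk' & Hh'0 & Hk'0 & Dh & Dk & Hq).
  assert (HR' : is_lim_seq (fun n => f (h' n) / h' n) R0).
  { refine (is_lim_seq_along_values h h' _ Hh'0 _ (fun x => f x / x) R0 HR).
    - intro m; apply Rgt_not_eq, Hh.
    - intro n; now apply domD_pos with k. }
  assert (HL' : is_lim_seq (fun n => f (- k' n) / - k' n) L).
  { refine (is_lim_seq_along_values k k' _ Hk'0 _ (fun x => f (- x) / - x) L HL).
    - intro m; apply Rgt_not_eq, Hk.
    - intro n; now apply domD_neg with h. }
  assert (Hlow := is_lim_seq_le _ _ _ _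
    (fun n => proj1 (cord_quotient_between f _ _ (Hh' n) (Hk' n)))
    (is_lim_seq_Rmin _ _ _ _ HL' HR') Hq).
  assert (Hup := is_lim_seq_le _ _ _ _
    (fun n => proj2 (cord_quotient_between f _ _ (Hh' n) (Hk' n)))
    Hq (is_lim_seq_Rmax _ _ _ _ HL' HR')).
  destruct L' as [r| |]; simpl in Hlow, Hup; try contradiction.
  now exists r.
Qed.
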